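(* Let $F=F(N,\mathcal D)$ be a connected GSC and let $i,j\in\mathcal D$ be distinct. Then $\varphi_i(F)\cap\varphi_j(F)$ is a singleton if and only if there is exactly one pair $(i',j')\in\mathcal D\times\mathcal D$ such that $\varphi_{ii'}(F)\cap\varphi_{jj'}(F)\ne\varnothing$. Moreover, if this holds and $i'$ is a corner digit, then $j'$ is also a corner digit.
   Context: GSC: $N\ge2$, $\mathcal D\subset\{0,\dots,N-1\}^2$ with $1<|\mathcal D|<N^2$, $\varphi_i(x)=\frac1N(x+i)$, $F$ the attractor $F=\bigcup_{i\in\mathcal D}\varphi_i(F)$; $\varphi_{ii'}=\varphi_i\circ\varphi_{i'}$. A digit $i\in\mathcal D$ is a corner digit if $i\in\{(0,0),(0,N-1),(N-1,0),(N-1,N-1)\}$. *)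

From HB Require Import structures.
From mathcomp Require Import all_boot all_order all_algebra.
From mathcomp Require Import all_classical all_reals all_analysis.
Set Implicit Arguments. Unset Strict Implicit. Unset Printing Implicit Defensive.
Import Order.TTheory GRing.Theory Num.Theory.
Import numFieldNormedType.Exports.
Local Open Scope classical_set_scope.
Local Open Scope ring_scope.

(* A digit is a pair (a,b) with a,b in {0,...,N-1}. Points of the plane are R * R
   (product topology = Euclidean topology). *)
Definition digit (N : nat) := ('I_N * 'I_N)%type.

Definition phi {R : realType} (N : nat) (i : digit N) (x : R * R) : R * R :=
  ((x.1 + (i.1 : nat)%:R) / N%:R, (x.2 + (i.2 : nat)%:R) / N%:R).

Definition phi2 {R : realType} (N : nat) (i i' : digit N) : R * R -> R * R :=
  phi i \o phi i'.

(* F is the attractor of the IFS {phi_i : i in D}: the unique nonempty compact set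
   with F = \bigcup_{i in D} phi_i(F) (Hutchinson). *)
Definition is_attractor {R : realType} (N : nat) (D : {set digit N}) (F : set (R * R)) :=
  [/\ compact F, F !=set0 &
      F = \bigcup_(i in [set i | i \in D]) (phi i @` F)].

Definition GSC_data (N : nat) (D : {set digit N}) :=
  (2 <= N)%N /\ (1 < #|D| < N ^ 2)%N.

Definition corner_digit (N : nat) (i : digit N) : bool :=
  (((i.1 : nat) == 0%N) || ((i.1 : nat) == N.-1)) &&
  (((i.2 : nat) == 0%N) || ((i.2 : nat) == N.-1)).

(* Points of F lie in the unit square, so phi_i a = phi_j b with a, b in F forces,
   along every axis where the digits i and j differ, the coordinates of a and b to
   be 0 and 1 (the two cells touch across an edge); along an axis where i and j
   agree, a and b have the same coordinate.
   If phi_i(F) and phi_j(F) meet in a single point x, every second-level pair that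
   meets sees x.  Two such pairs with different first digits i1, i2 would put x
   at an interior point of the common edge of the subcells i1 and i2, and sliding
   a preimage along the common edge of cells i and j then produces a second point
   of the intersection.  Likewise, if i' lies on an edge along an axis where
   j' does not, the first digit d of the preimage of x in the j'-subcell gives a
   second meeting pair (i', d).
   Conversely, if (i', j') is the only meeting pair, each coordinate of a point of
   the intersection is fixed by an adjacency at the first or second level, or else
   the set of its possible values is mapped into itself by an affine map of ratio
   N, hence is a single point. *)

From HB Require Import structures.
From mathcomp Require Import all_boot all_order all_algebra.
From mathcomp Require Import all_classical all_reals all_analysis.
From mathcomp Require Import lra ring zify.
Import numFieldNormedType.Exports.
Set Implicit Arguments. Unset Strict Implicit. Unset Printing Implicit Defensive.
Import Order.TTheory GRing.Theory Num.Theory.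
Local Open Scope classical_set_scope.
Local Open Scope ring_scope.

Section UnitInterval.
Variable R : realFieldType.

Lemma unit_add_natr_eq_natr (t : R) (m n : nat) : 0 <= t <= 1 ->
  t + m%:R = n%:R -> t = (m < n)%N%:R /\ n = (m + (m < n))%N.
Proof.
move=> /andP[t0 t1] e; case: (ltngtP m n) => mn /=.
- have le : (m.+1%:R : R) <= n%:R by rewrite ler_nat.
  have -> : n = m.+1 by apply/eqP; rewrite -(eqr_nat R) eq_le le /= -e -natr1; lra.
  by rewrite addn1; split => //; move: e; rewrite -natr1; lra.
- have : (n.+1%:R : R) <= m%:R by rewrite ler_nat.
  by rewrite -natr1 => ?; exfalso; lra.
- by rewrite mn addn0; split => //; move: e; rewrite mn; lra.
Qed.

Lemma unit_add_natr_eq (s t : R) (m n : nat) : 0 <= s <= 1 -> 0 <= t <= 1 ->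
  s + m%:R = t + n%:R -> m != n ->
  [/\ s = (m < n)%N%:R, t = (n < m)%N%:R & s + m%:R = (maxn m n)%:R].
Proof.
move=> /andP[s0 s1] /andP[t0 t1] e mn.
case: (ltngtP m n) => lmn; last by rewrite lmn eqxx in mn.
- have le : (m.+1%:R : R) <= n%:R by rewrite ler_nat.
  move: le; rewrite -natr1 => le; split => /=; lra.
- have le : (n.+1%:R : R) <= m%:R by rewrite ler_nat.
  move: le; rewrite -natr1 => le; split => /=; lra.
Qed.

End UnitInterval.

Section Coordinates.
Variables (R : realType) (N : nat).
Hypothesis N_gt1 : (1 < N)%N.

(* An axis is a boolean, [true] for the first coordinate, so [~~ c] is the other. *)
Definition pcoord (c : bool) (p : R * R) : R := if c then p.1 else p.2.
Definition dcoord (c : bool) (d : digit N) : nat := if c then d.1 else d.2.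
Definition in_unit_square (p : R * R) := forall c, 0 <= pcoord c p <= 1.

Lemma natrN_neq0 : (N%:R : R) != 0.
Proof. by rewrite pnatr_eq0 -lt0n ltnW. Qed.

Lemma dcoord_lt c d : (dcoord c d < N)%N.
Proof. by case: c; rewrite /dcoord ltn_ord. Qed.

Lemma pcoord_phi c d x : N%:R * pcoord c (phi d x) = pcoord c x + (dcoord c d)%:R.
Proof. by case: c; rewrite /pcoord /phi /= mulrC divfK // natrN_neq0. Qed.

Lemma pcoord_eq c (p q : R * R) :
  pcoord c p = pcoord c q -> pcoord (~~ c) p = pcoord (~~ c) q -> p = q.
Proof. by case: c p q => -[p1 p2] [q1 q2] /= -> ->. Qed.

Lemma dcoord_eq c (d e : digit N) :
  dcoord c d = dcoord c e -> dcoord (~~ c) d = dcoord (~~ c) e -> d = e.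
Proof.
by case: c d e => -[d1 d2] [e1 e2]; rewrite /dcoord /= => /val_inj-> /val_inj->.
Qed.

Lemma pcoord_phi_eq c i j (a b : R * R) : phi i a = phi j b ->
  pcoord c a + (dcoord c i)%:R = pcoord c b + (dcoord c j)%:R.
Proof. by move=> e; rewrite -!pcoord_phi e. Qed.

Lemma phi_eq_pcoord c i j (a b : R * R) :
  pcoord c a + (dcoord c i)%:R = pcoord c b + (dcoord c j)%:R ->
  pcoord (~~ c) a + (dcoord (~~ c) i)%:R = pcoord (~~ c) b + (dcoord (~~ c) j)%:R ->
  phi i a = phi j b.
Proof.
by move=> ec enc; apply: (pcoord_eq (c := c)); apply: (mulfI natrN_neq0);
  rewrite !pcoord_phi.
Qed.

Lemma dcoord_negb_neq i j c :
  i != j -> dcoord c i = dcoord c j -> dcoord (~~ c) i != dcoord (~~ c) j.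
Proof. by move=> /eqP ij ijc; apply/eqP => /(dcoord_eq ijc). Qed.

Lemma pcoord_phi_congr c (d e : digit N) (x y : R * R) :
  pcoord c x = pcoord c y -> dcoord c d = dcoord c e ->
  pcoord c (phi d x) = pcoord c (phi e y).
Proof. by move=> xy de; apply: (mulfI natrN_neq0); rewrite !pcoord_phi xy de. Qed.

Lemma pcoord_phi_inj c (d e : digit N) (x y : R * R) :
  pcoord c (phi d x) = pcoord c (phi e y) -> dcoord c d = dcoord c e ->
  pcoord c x = pcoord c y.
Proof.
move=> /(congr1 (fun t => N%:R * t)); rewrite !pcoord_phi => xy de.
by rewrite de in xy; apply: addIr xy.
Qed.

Lemma phi_inj (d : digit N) : injective (phi (R := R) d).
Proof.
by move=> x y e; apply: (pcoord_eq (c := true)); apply: pcoord_phi_inj (congr1 _ e) _.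
Qed.

Definition edge_digit c (d : digit N) := (dcoord c d == 0%N) || (dcoord c d == N.-1).

Lemma corner_digitE d : corner_digit d = edge_digit true d && edge_digit false d.
Proof. by []. Qed.

Lemma edge_digit_if (b : bool) c d :
  dcoord c d = (if b then N.-1 else 0)%N -> edge_digit c d.
Proof. by rewrite /edge_digit; case: b => ->; rewrite eqxx ?orbT. Qed.

Lemma pcoord_phi_bit (b : bool) c d u : in_unit_square u ->
  pcoord c (phi d u) = b%:R ->
  pcoord c u = b%:R /\ dcoord c d = (if b then N.-1 else 0)%N.
Proof.
move=> /(_ c) u01 e.
have e' : pcoord c u + (dcoord c d)%:R = (b * N)%N%:R.
  by rewrite -pcoord_phi e natrM mulrC.
have [-> hN] := unit_add_natr_eq_natr u01 e'.
have := dcoord_lt c d; case: b {e e'} hN; rewrite ?mul1n ?mul0n => hN ltN.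
  by rewrite ltN; split=> //; lia.
by rewrite ltn0; split=> //; lia.
Qed.

Lemma phi_eq_pcoord_eq c i j (a b : R * R) :
  phi i a = phi j b -> dcoord c i = dcoord c j -> pcoord c a = pcoord c b.
Proof. by move=> /(pcoord_phi_eq c) e ij; rewrite ij in e; apply: addIr e. Qed.

Lemma phi_eq_pcoord_neq c i j (a b : R * R) :
  in_unit_square a -> in_unit_square b -> phi i a = phi j b ->
  dcoord c i != dcoord c j ->
  [/\ pcoord c a = (dcoord c i < dcoord c j)%N%:R,
      pcoord c b = (dcoord c j < dcoord c i)%N%:R
    & N%:R * pcoord c (phi i a) = (maxn (dcoord c i) (dcoord c j))%:R].
Proof.
move=> /(_ c) a01 /(_ c) b01 /(pcoord_phi_eq c) e ij.
by have [? ? <-] := unit_add_natr_eq a01 b01 e ij; rewrite pcoord_phi; split.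
Qed.

Lemma phi_eq_shift c i j (a b u v : R * R) :
  phi i a = phi j b -> dcoord c i = dcoord c j ->
  pcoord (~~ c) u = pcoord (~~ c) a -> pcoord (~~ c) v = pcoord (~~ c) b ->
  pcoord c u = pcoord c v -> phi i u = phi j v.
Proof.
move=> e ij ua vb uv; apply: (phi_eq_pcoord (c := c)); first by rewrite uv ij.
by rewrite ua vb; apply: pcoord_phi_eq.
Qed.

End Coordinates.

Lemma expanding_subset1 (R : archiRealFieldType) (N : nat) (S : set R) (K : R) :
  (1 < N)%N -> (forall s, S s -> 0 <= s <= 1) ->
  (forall s, S s -> exists2 s', S s' & N%:R * s = s' + K) -> is_subset1 S.
Proof.
move=> N_gt1 S01 S_exp.
have dist_le n s t : S s -> S t -> N%:R ^+ n * `|s - t| <= 1.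
  elim: n s t => [|n IHn] s t Ss St.
    have /andP[? ?] := S01 s Ss; have /andP[? ?] := S01 t St.
    by rewrite expr0 mul1r ler_norml; apply/andP; split; lra.
  have [s' Ss' es] := S_exp s Ss; have [t' St' et] := S_exp t St.
  rewrite exprSr -mulrA.
  have -> : N%:R * `|s - t| = `|s' - t'|.
    rewrite -[N%:R]ger0_norm ?ler0n // -normrM mulrBr es et.
    by rewrite opprD addrACA subrr addr0.
  exact: IHn.
move=> s t Ss St; apply/eqP; rewrite -subr_eq0 -normr_eq0.
case: eqVneq => // d_neq0; exfalso.
have d_gt0 : 0 < `|s - t| by rewrite lt0r d_neq0 normr_ge0.
set n := (Num.truncn (`|s - t|^-1)).+1.
have n_gt : `|s - t|^-1 < n%:R := truncnS_gt _.
have n_le : (n%:R : R) <= N%:R ^+ n by rewrite -natrX ler_nat ltnW // ltn_expl.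
move: n_gt; rewrite -[_^-1]div1r ltr_pdivrMr // => n_gt.
have := ler_wpM2r (ltW d_gt0) n_le; have := dist_le n s t Ss St; lra.
Qed.

Lemma sup_le_affine_fixpoint (R : realType) (S : set R) (r K : R) :
  1 < r -> S !=set0 -> has_ubound S ->
  (forall x, S x -> exists2 y, S y & x <= (y + K) / r) ->
  forall x, S x -> x <= K / (r - 1).
Proof.
move=> r_gt1 S0 Sub S_aff.
have ub := sup_upper_bound (conj S0 Sub).
have : sup S <= (sup S + K) / r.
  apply: ge_sup => // x Sx; have [y Sy le_xy] := S_aff x Sx.
  apply: (le_trans le_xy); rewrite ler_pM2r ?invr_gt0; last lra.
  by rewrite lerD2r; apply: ub.
rewrite ler_pdivlMr; last lra.
move=> le_sup x Sx; apply: (le_trans (ub x Sx)).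
by rewrite ler_pdivlMr; lra.
Qed.

Section Attractor.
Variables (R : realType) (N : nat) (D : {set digit N}) (F : set (R * R)).
Hypothesis N_gt1 : (1 < N)%N.
Hypothesis F_attr : is_attractor D F.

Lemma attractor_phi d q : d \in D -> F q -> F (phi d q).
Proof. by move=> Dd Fq; case: F_attr => _ _ ->; exists d => //; exists q. Qed.

Lemma attractor_decomp p : F p -> exists d q, [/\ d \in D, F q & p = phi d q].
Proof.
by case: F_attr => _ _ FE; rewrite {1}FE => -[d Dd [q Fq <-]]; exists d, q.
Qed.

Lemma attractor_in_unit_square p : F p -> in_unit_square p.
Proof.
case: F_attr => /compact_bounded [M [_ FM]] [p0 Fp0] _ Fp c.
have M1 q : F q -> `|pcoord c q| <= M + 1.
  move=> Fq; have := FM (M + 1) ltac:(lra) q Fq; cbn.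
  by rewrite /ProdNormedZmodule.norm ge_max => /andP[]; case: c.
have N_gt1r : 1 < (N%:R : R) by rewrite ltr1n.
have pcoord_div (d : digit N) (q : R * R) :
    pcoord c (phi d q) = (pcoord c q + (dcoord c d)%:R) / N%:R.
  by case: (c).
have dc_le (d : digit N) : ((dcoord c d)%:R : R) <= N%:R - 1.
  by have := dcoord_lt c d; rewrite -(ler_nat R) -natr1; lra.
have le1 : pcoord c p <= (N%:R - 1) / (N%:R - 1).
  apply: (sup_le_affine_fixpoint (S := [set pcoord c q | q in F])) => //.
  - by exists (pcoord c p0), p0.
  - by exists (M + 1) => _ [q Fq <-]; apply: le_trans (ler_norm _) (M1 q Fq).
  - move=> _ [q Fq <-]; have [d [u [Dd Fu ->]]] := attractor_decomp Fq.
    exists (pcoord c u); first by exists u.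
    by rewrite pcoord_div ler_pM2r ?invr_gt0 ?lerD2l //; lra.
  - by exists p.
have ge0 : - pcoord c p <= 0 / (N%:R - 1).
  apply: (sup_le_affine_fixpoint (S := [set - pcoord c q | q in F])) => //.
  - by exists (- pcoord c p0), p0.
  - exists (M + 1) => _ [q Fq <-].
    by apply: le_trans (ler_norm _) _; rewrite normrN; apply: M1.
  - move=> _ [q Fq <-]; have [d [u [Dd Fu ->]]] := attractor_decomp Fq.
    exists (- pcoord c u); first by exists u.
    rewrite pcoord_div addr0 -mulNr ler_pM2r ?invr_gt0; last lra.
    by have := ler0n R (dcoord c d); lra.
  - by exists p.
have N1_neq0 : N%:R - 1 != 0 :> R by rewrite subr_eq0 gt_eqF.
by move: le1 ge0; rewrite divff // mul0r => ? ?; apply/andP; split; lra.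
Qed.

End Attractor.

Section Meet.
Variables (R : realType) (N : nat) (D : {set digit N}) (F : set (R * R)).
Hypothesis N_gt1 : (1 < N)%N.
Hypothesis F_unit : forall p, F p -> in_unit_square p.
Hypothesis F_decomp : forall p, F p -> exists d q, [/\ d \in D, F q & p = phi d q].
Hypothesis F_phi : forall d q, d \in D -> F q -> F (phi d q).

Definition meet (i j : digit N) : set (R * R) := (phi i @` F) `&` (phi j @` F).
Definition meet2 (i j i' j' : digit N) : set (R * R) :=
  (phi2 i i' @` F) `&` (phi2 j j' @` F).

Lemma meetC i j : meet i j = meet j i.
Proof. exact: setIC. Qed.

Lemma meet2C i j i' j' : meet2 i j i' j' = meet2 j i j' i'.
Proof. exact: setIC. Qed.

Lemma meet2_sub_meet i j i' j' : i' \in D -> j' \in D -> meet2 i j i' j' `<=` meet i j.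
Proof.
move=> Di' Dj' y [[a' Fa' <-] [b' Fb' e]].
by split; [exists (phi i' a') | exists (phi j' b')]; rewrite //; apply: F_phi.
Qed.

Lemma meet_decomp i j y : meet i j y ->
  exists i' j', [/\ i' \in D, j' \in D & meet2 i j i' j' y].
Proof.
move=> [[a /F_decomp [i' [a' [Di' Fa' ->]]] ya] [b /F_decomp [j' [b' [Dj' Fb' ->]]] yb]].
by exists i', j'; split=> //; split; [exists a' | exists b'].
Qed.

Lemma meet_pcoord_neq i j c y : dcoord c i != dcoord c j -> meet i j y ->
  N%:R * pcoord c y = (maxn (dcoord c i) (dcoord c j))%:R.
Proof.
move=> ijc [[a Fa <-] [b Fb ba]].
by case: (phi_eq_pcoord_neq N_gt1 (F_unit Fa) (F_unit Fb) (esym ba) ijc).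
Qed.

Section SingleMeet.
Variables (i j : digit N) (x : R * R).
Hypotheses (ij : i != j) (meet_x : meet i j `<=` [set x]).

Lemma meet_single_slice c (a b u v : R * R) : F b -> F u -> F v ->
  phi i a = x -> phi i a = phi j b -> dcoord c i = dcoord c j ->
  pcoord (~~ c) u = pcoord (~~ c) a -> pcoord (~~ c) v = pcoord (~~ c) b ->
  pcoord c u = pcoord c v -> u = a.
Proof.
move=> Fb Fu Fv ax ab ijc ua vb uv; apply: (@phi_inj _ _ N_gt1 i); rewrite ax.
apply: meet_x; split; first by exists u.
by exists v => //; rewrite (phi_eq_shift N_gt1 ab ijc ua vb uv).
Qed.

Lemma meet_single_dcoord c (i1 i2 j1 : digit N) (a1 a2 b1 : R * R) :
  i1 \in D -> j1 \in D -> F a1 -> F a2 -> F b1 ->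
  phi i (phi i1 a1) = x -> phi i (phi i2 a2) = x ->
  phi i (phi i1 a1) = phi j (phi j1 b1) -> dcoord c i1 = dcoord c i2.
Proof.
move=> Di1 Dj1 Fa1 Fa2 Fb1 x1 x2 e.
have a12 : phi i1 a1 = phi i2 a2 by apply: (@phi_inj _ _ N_gt1 i); rewrite x1 x2.
set a := phi i1 a1 in x1 e a12; set b := phi j1 b1 in e.
have [Fa Fb] : F a /\ F b by split; apply: F_phi.
have ua := F_unit Fa; have ub := F_unit Fb.
have u1 := F_unit Fa1; have u2 := F_unit Fa2; have v1 := F_unit Fb1.
case: (eqVneq (dcoord c i) (dcoord c j)) => ijc; last first.
  have [ac _ _] := phi_eq_pcoord_neq N_gt1 ua ub e ijc.
  have [_ ->] := pcoord_phi_bit N_gt1 u1 ac.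
  by rewrite a12 in ac; have [_ ->] := pcoord_phi_bit N_gt1 u2 ac.
have [anc bnc _] := phi_eq_pcoord_neq N_gt1 ua ub e (dcoord_negb_neq ij ijc).
have [a1nc _] := pcoord_phi_bit N_gt1 u1 anc.
have [a2nc _] := pcoord_phi_bit N_gt1 u2 (etrans (congr1 (pcoord (~~ c)) (esym a12)) anc).
have [b1nc _] := pcoord_phi_bit N_gt1 v1 bnc.
case: (eqVneq (dcoord c i1) (dcoord c i2)) => // i12; exfalso.
(* Now N a_c = k lies strictly between 0 and N, whereas b1_c is 0 or 1, hence equal
   to a1_c or to a2_c; the slice lemma identifies that point with a. *)
have [a1c a2c Nac] := phi_eq_pcoord_neq N_gt1 u1 u2 a12 i12.
set k := maxn _ _ in Nac.
have : pcoord c b1 + (dcoord c j1)%:R = k%:R.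
  rewrite -(pcoord_phi N_gt1) -Nac; congr (_ * _).
  exact/esym/(phi_eq_pcoord_eq N_gt1 e ijc).
move=> /(unit_add_natr_eq_natr (v1 c)) [b1c _].
have [u [Fu uc unc]] :
    exists u, [/\ F u, pcoord c u = pcoord c b1 & pcoord (~~ c) u = pcoord (~~ c) a].
  have i21 : (dcoord c i2 < dcoord c i1)%N = ~~ (dcoord c i1 < dcoord c i2)%N.
    by move: i12; case: (ltngtP (dcoord c i1) (dcoord c i2)).
  rewrite b1c; case: (boolP ((dcoord c j1 < k)%N == (dcoord c i1 < dcoord c i2)%N)).
    by move=> /eqP->; exists a1; rewrite a1c a1nc anc.
  by move=> h; exists a2; rewrite a2c a2nc anc i21; move: h; do 2!case: (_ < _)%N.
have ua1 := meet_single_slice Fb Fu Fb1 x1 e ijc unc (etrans b1nc (esym bnc)) uc.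
move: Nac; rewrite -/a -ua1 uc b1c -natrM.
case: (dcoord c j1 < k)%N; rewrite /= ?muln1 ?muln0 => /eqP; rewrite eqr_nat /k => /eqP.
all: by have := dcoord_lt c i1; have := dcoord_lt c i2; move/eqP: i12; lia.
Qed.

Lemma meet_single_meet2_fst (i1 j1 i2 j2 : digit N) :
  i1 \in D -> j1 \in D -> i2 \in D -> j2 \in D ->
  meet2 i j i1 j1 !=set0 -> meet2 i j i2 j2 !=set0 -> i1 = i2.
Proof.
move=> Di1 Dj1 Di2 Dj2 [y y12] [z z12].
have yx : y = x by apply: meet_x; apply: (meet2_sub_meet Di1 Dj1 y12).
have zx : z = x by apply: meet_x; apply: (meet2_sub_meet Di2 Dj2 z12).
case: y12 z12 => -[a1 Fa1 ay] [b1 Fb1 e] [[a2 Fa2 az] _].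
have dc c := meet_single_dcoord c Di1 Dj1 Fa1 Fa2 Fb1 (etrans ay yx) (etrans az zx)
  (etrans ay (esym e)).
exact: (dcoord_eq (dc true) (dc false)).
Qed.

End SingleMeet.

Lemma meet_single_meet2_snd (i j : digit N) x (i1 j1 i2 j2 : digit N) :
  i != j -> meet i j `<=` [set x] ->
  i1 \in D -> j1 \in D -> i2 \in D -> j2 \in D ->
  meet2 i j i1 j1 !=set0 -> meet2 i j i2 j2 !=set0 -> j1 = j2.
Proof.
rewrite meetC (meet2C i j i1) (meet2C i j i2) eq_sym => ji meet_x Di1 Dj1 Di2 Dj2.
exact: (meet_single_meet2_fst ji meet_x Dj1 Di1 Dj2 Di2).
Qed.

Lemma meet_single_edge_digit (i j : digit N) x (i' j' : digit N) c :
  i != j -> meet i j `<=` [set x] -> i' \in D -> j' \in D ->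
  meet2 i j i' j' !=set0 -> edge_digit c i' -> edge_digit c j'.
Proof.
move=> ij meet_x Di' Dj' ne; have [y [[a' Fa' ya] [b' Fb' yb]]] := ne.
rewrite /phi2 /= in ya yb.
set a := phi i' a' in ya; set b := phi j' b' in yb.
have Fa : F a by apply: F_phi.
have Fb : F b by apply: F_phi.
have e : phi i a = phi j b by rewrite ya yb.
have ua' := F_unit Fa'; have ub' := F_unit Fb'.
case: (eqVneq (dcoord c i) (dcoord c j)) => ijc; last first.
  have [_ bc _] := phi_eq_pcoord_neq N_gt1 (F_unit Fa) (F_unit Fb) e ijc.
  by move=> _; apply: (@edge_digit_if _ _ _ _ (pcoord_phi_bit N_gt1 ub' bc).2).
rewrite /edge_digit.
case: (eqVneq (dcoord c i') (dcoord c j')) => [<- // | ijc' ei']; exfalso.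
have [anc bnc _] :=
  phi_eq_pcoord_neq N_gt1 (F_unit Fa) (F_unit Fb) e (dcoord_negb_neq ij ijc).
have [a'nc _] := pcoord_phi_bit N_gt1 ua' anc.
have [b'nc j'nc] := pcoord_phi_bit N_gt1 ub' bnc.
have abc := phi_eq_pcoord_eq N_gt1 e ijc.
have e' : pcoord c a' + (dcoord c i')%:R = pcoord c b' + (dcoord c j')%:R.
  by rewrite -!(pcoord_phi N_gt1) abc.
have [_ b'c _] := unit_add_natr_eq (ua' c) (ub' c) e' ijc'.
have [d [u [Dd Fu b'E]]] := F_decomp Fb'.
have dc : dcoord c d = dcoord c i'.
  move: b'c; rewrite b'E => /(pcoord_phi_bit N_gt1 (F_unit Fu)) [_ ->].
  have := dcoord_lt c i'; have := dcoord_lt c j'; move: ei' ijc'.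
  by case: (ltngtP (dcoord c j') (dcoord c i')); lia.
have dnc : dcoord (~~ c) d = dcoord (~~ c) j'.
  by move: b'nc; rewrite b'E j'nc => /(pcoord_phi_bit N_gt1 (F_unit Fu)) [_ ->].
suff /(meet_single_meet2_snd ij meet_x Di' Dj' Di' Dd ne) j'd : meet2 i j i' d !=set0.
  by rewrite j'd dc eqxx in ijc'.
exists (phi i (phi i' a)); split; first by exists a.
exists b => //; rewrite /phi2 /=; symmetry.
apply: (phi_eq_shift N_gt1 e ijc).
- by apply: (pcoord_phi_congr N_gt1); rewrite // anc a'nc.
- by apply: (pcoord_phi_congr N_gt1); rewrite // bnc b'nc.
- exact: (pcoord_phi_congr N_gt1 abc (esym dc)).
Qed.

Section UniqueMeet2.
Variables (i j i' j' : digit N).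
Hypotheses (ij : i != j) (Di : i \in D) (Di' : i' \in D) (Dj' : j' \in D).
Hypothesis meet_sub : meet i j `<=` meet2 i j i' j'.

Lemma meet2_unique_pcoord_neq c y :
  dcoord c i = dcoord c j -> dcoord c i' != dcoord c j' -> meet i j y ->
  N%:R * (N%:R * pcoord c y) =
    (maxn (dcoord c i') (dcoord c j'))%:R + N%:R * (dcoord c i)%:R.
Proof.
move=> ijc ijc' /meet_sub [[a' Fa' <-] [b' Fb' e]].
rewrite /phi2 /= in e *; rewrite pcoord_phi // mulrDr pcoord_phi //.
have abc := phi_eq_pcoord_eq N_gt1 (esym e) ijc.
have e' : pcoord c a' + (dcoord c i')%:R = pcoord c b' + (dcoord c j')%:R.
  by rewrite -!(pcoord_phi N_gt1) abc.
by have [_ _ ->] := unit_add_natr_eq (F_unit Fa' c) (F_unit Fb' c) e' ijc'.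
Qed.

Lemma meet2_unique_pcoord_eq c :
  dcoord c i = dcoord c j -> dcoord c i' = dcoord c j' ->
  is_subset1 [set pcoord c y | y in meet i j].
Proof.
move=> ijc ijc'.
(* With y = phi_i (phi_i' a'), the point phi_i a' is again in [meet i j] and
   N y_c = (phi_i a')_c + K. *)
set K : R := ((dcoord c i')%:R + N%:R * (dcoord c i)%:R - (dcoord c i)%:R) / N%:R.
apply: (expanding_subset1 (K := K) N_gt1).
  by move=> _ [y [[a Fa <-] _] <-]; apply: F_unit; apply: F_phi.
move=> _ [y /meet_sub [[a' Fa' <-] [b' Fb' e]] <-]; rewrite /phi2 /= in e *.
have [Fa Fb] : F (phi i' a') /\ F (phi j' b') by split; apply: F_phi.
have [anc bnc _] := phi_eq_pcoord_neq N_gt1 (F_unit Fa) (F_unit Fb) (esym e)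
  (dcoord_negb_neq ij ijc).
have e1 : phi i a' = phi j b'.
  apply: (phi_eq_shift N_gt1 (esym e) ijc).
  - by rewrite anc; apply: (pcoord_phi_bit N_gt1 (F_unit Fa') anc).1.
  - by rewrite bnc; apply: (pcoord_phi_bit N_gt1 (F_unit Fb') bnc).1.
  - exact: (pcoord_phi_inj N_gt1 (phi_eq_pcoord_eq N_gt1 (esym e) ijc) ijc').
exists (pcoord c (phi i a')); first by exists (phi i a'); split; [exists a' | exists b'].
apply: (mulfI (natrN_neq0 R N_gt1)); rewrite mulrDr [_ * K]mulrC divfK ?natrN_neq0 //.
rewrite !pcoord_phi // mulrDr pcoord_phi //; ring.
Qed.

Lemma meet2_unique_subset1 : is_subset1 (meet i j).
Proof.
move=> y z my mz.
have NN := natrN_neq0 R N_gt1.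
have yz c : pcoord c y = pcoord c z.
  case: (eqVneq (dcoord c i) (dcoord c j)) => ijc; last first.
    by apply: (mulfI NN); rewrite !(meet_pcoord_neq ijc).
  case: (eqVneq (dcoord c i') (dcoord c j')) => ijc'; last first.
    by apply: (mulfI NN); apply: (mulfI NN); rewrite !(meet2_unique_pcoord_neq ijc ijc').
  by apply: (meet2_unique_pcoord_eq ijc ijc'); [exists y | exists z].
exact: (pcoord_eq (yz true) (yz false)).
Qed.

End UniqueMeet2.

End Meet.

Theorem mainTheorem12 (R : realType) (N : nat) (D : {set digit N})
    (F : set (R * R)) :
  GSC_data D -> is_attractor D F -> connected F ->
  forall i j : digit N, i \in D -> j \in D -> i != j ->
  ((exists x : R * R, (phi i @` F) `&` (phi j @` F) = [set x]) <->
   (exists! p : digit N * digit N,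
      (p.1 \in D /\ p.2 \in D) /\
      (phi2 i p.1 @` F) `&` (phi2 j p.2 @` F) !=set0)) /\
  ((exists x : R * R, (phi i @` F) `&` (phi j @` F) = [set x]) ->
   forall i' j' : digit N, i' \in D -> j' \in D ->
   (phi2 i i' @` F) `&` (phi2 j j' @` F) !=set0 ->
   corner_digit i' -> corner_digit j').
Proof.
move=> [N_gt1 _] F_attr _ i j Di Dj ij.
have F_unit := attractor_in_unit_square N_gt1 F_attr.
have F_decomp := attractor_decomp F_attr.
have F_phi := attractor_phi F_attr.
split; first split.
- move=> [x meetE]; have meet_x : meet F i j `<=` [set x] by rewrite /meet meetE.
  have [i' [j' [Di' Dj' mx]]] : exists i' j', [/\ i' \in D, j' \in D & meet2 F i j i' j' x].
    by apply: (meet_decomp F_decomp); rewrite /meet meetE.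
  have ne : meet2 F i j i' j' !=set0 by exists x.
  exists (i', j'); split=> // -[i2 j2] [[/= Di2 Dj2] ne2].
  by rewrite (meet_single_meet2_fst N_gt1 F_unit F_phi ij meet_x Di' Dj' Di2 Dj2 ne ne2)
    (meet_single_meet2_snd N_gt1 F_unit F_phi ij meet_x Di' Dj' Di2 Dj2 ne ne2).
- move=> [[i' j'] [[[/= Di' Dj'] [y my]] uniq]].
  have meet_sub : meet F i j `<=` meet2 F i j i' j'.
    move=> z /(meet_decomp F_decomp) [i2 [j2 [Di2 Dj2 mz]]].
    by case: (uniq (i2, j2) (conj (conj Di2 Dj2) (ex_intro _ z mz))) => -> ->.
  have my1 := meet2_sub_meet F_phi Di' Dj' my.
  exists y; apply/seteqP; split=> [z mz | _ ->] //.
  exact: (meet2_unique_subset1 N_gt1 F_unit F_phi ij Di Di' Dj' meet_sub mz my1).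
- move=> [x meetE] i' j' Di' Dj' ne; rewrite !corner_digitE => /andP[ei1 ei2].
  have meet_x : meet F i j `<=` [set x] by rewrite /meet meetE.
  by apply/andP; split;
    apply: (meet_single_edge_digit N_gt1 F_unit F_decomp F_phi ij meet_x Di' Dj' ne).
Qed.
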